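(* For any vector $\vec\lambda=(\lambda_1,\dots,\lambda_n)\in\mathbb{R}^n$ and any $\vec a=(a_1,\dots,a_n)\in\mathbb{R}^n$ with $|\vec a|=1$, $$\Big|\sum_{i=1}^n\lambda_i^2a_i^2-\Big(\sum_{i=1}^n\lambda_i\Big)\Big(\sum_{j=1}^n\lambda_ja_j^2\Big)-\frac12\Big[\sum_{i=1}^n\lambda_i^2-\Big(\sum_{i=1}^n\lambda_i\Big)^2\Big]\Big|\le\frac{n-2}{2}\Big[\sum_{i=1}^n\lambda_i^2-\sum_{i=1}^n\lambda_i^2a_i^2\Big].$$ *)

From mathcomp Require Import all_boot all_order all_algebra.
From mathcomp Require Import reals.

(** Writing [S] and [Q] for the sum and the sum of squares of the [lam i],
    and [w k := a k ^+ 2] (a probability vector), the left-hand side is the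
    [w]-average of [lam k ^+ 2 - S * lam k - (Q - S ^+ 2) / 2], which is half
    of [T_k ^+ 2 - P_k] for the sum [T_k] and sum of squares [P_k] of the
    [lam i] with [i != k]; the right-hand side is the [w]-average of
    [(n - 2) / 2 * P_k].  It therefore suffices to bound [|T_k ^+ 2 - P_k|] by
    [(n - 2) * P_k] for a family of [n - 1] numbers, which is Cauchy-Schwarz
    above and positivity of [T_k ^+ 2] below. *)
From mathcomp Require Import all_boot all_order all_algebra.
From mathcomp Require Import reals.
From mathcomp Require Import ring lra.
Import Order.TTheory GRing.Theory Num.Theory.
Local Open Scope ring_scope.

Section SumOfSquares.

Context {R : realDomainType} {I : finType}.
Implicit Types (A : pred I) (x : I -> R).

Lemma sum_sqr_ge0 A x : 0 <= \sum_(i in A) x i ^+ 2.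
Proof. by apply: sumr_ge0 => i _; exact: sqr_ge0. Qed.

(* Expanding [\sum_i \sum_j (x i - x j) ^+ 2 >= 0]. *)
Lemma sqr_sum_le_card_sum_sqr A x :
  (\sum_(i in A) x i) ^+ 2 <= #|A|%:R * \sum_(i in A) x i ^+ 2.
Proof.
set S := \sum_(i in A) x i; set Q := \sum_(i in A) x i ^+ 2.
have inner i : \sum_(j in A) (x i - x j) ^+ 2 = #|A|%:R * x i ^+ 2 - 2 * x i * S + Q.
  transitivity (\sum_(j in A) (x i ^+ 2 - 2 * x i * x j + x j ^+ 2)).
    by apply: eq_bigr => j _; ring.
  rewrite big_split sumrB /= sumr_const -mulr_sumr -/S -/Q mulr_natl; ring.
have double : \sum_(i in A) \sum_(j in A) (x i - x j) ^+ 2 = (#|A|%:R * Q - S ^+ 2) *+ 2.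
  under eq_bigr => i _ do rewrite inner.
  rewrite big_split sumrB /= -mulr_suml -!mulr_sumr sumr_const -/S -/Q mulr_natl; ring.
have : 0 <= \sum_(i in A) \sum_(j in A) (x i - x j) ^+ 2.
  by apply: sumr_ge0 => i _; exact: sum_sqr_ge0.
rewrite double pmulrn_lge0 // subr_ge0; exact.
Qed.

Lemma norm_sqr_sum_sub_sum_sqr_le A x :
  `|(\sum_(i in A) x i) ^+ 2 - \sum_(i in A) x i ^+ 2|
    <= (#|A|%:R - 1) * \sum_(i in A) x i ^+ 2.
Proof.
have Q_ge0 := sum_sqr_ge0 A x.
case cardA: #|A| => [|[|m]].
- have A0 := card0_eq cardA.
  by rewrite !big_pred0 // expr0n subrr normr0 mulr0.
- have [y Ay] := mem_card1 cardA.
  by rewrite !(big_pred1 y) // subrr normr0 subrr mul0r.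
- have := sqr_sum_le_card_sum_sqr A x; rewrite cardA => CS.
  have two_le : (2 : R) <= m.+2%:R by rewrite ler_nat.
  have S2_ge0 := sqr_ge0 (\sum_(i in A) x i).
  rewrite ler_norml; apply/andP; split; nra.
Qed.

End SumOfSquares.

Section LeaveOneOut.

Context {R : realFieldType} {I : finType} {w : I -> R} (lam : I -> R).
Hypothesis w_sum1 : \sum_i w i = 1.

Let S := \sum_i lam i.
Let Q := \sum_i lam i ^+ 2.

Lemma quadratic_as_leave_one_out_avg :
  \sum_i lam i ^+ 2 * w i - S * (\sum_j lam j * w j) - 2^-1 * (Q - S ^+ 2) =
  \sum_k w k * (2^-1 * ((\sum_(i | i != k) lam i) ^+ 2 - \sum_(i | i != k) lam i ^+ 2)).
Proof.
transitivity (\sum_k (lam k ^+ 2 * w k - S * (lam k * w k) - 2^-1 * (Q - S ^+ 2) * w k)).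
  by rewrite !sumrB -!mulr_sumr w_sum1 mulr1.
apply: eq_bigr => k _.
by rewrite /S /Q (bigD1 k isT) [\sum_i lam i ^+ 2](bigD1 k isT) /=; field.
Qed.

Lemma sum_sqr_sub_as_leave_one_out_avg :
  Q - \sum_i lam i ^+ 2 * w i = \sum_k w k * \sum_(i | i != k) lam i ^+ 2.
Proof.
transitivity (\sum_k (w k * Q - lam k ^+ 2 * w k)).
  by rewrite sumrB -mulr_suml w_sum1 mul1r.
by apply: eq_bigr => k _; rewrite /Q (bigD1 k isT) /=; ring.
Qed.

End LeaveOneOut.

Lemma ler_norm_sum_wM (R : numDomainType) (I : finType) (w f g : I -> R) :
  (forall i, 0 <= w i) -> (forall i, `|f i| <= g i) ->
  `|\sum_i w i * f i| <= \sum_i w i * g i.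
Proof.
move=> w_ge0 fg; apply: le_trans (ler_norm_sum _ _ _) _.
by apply: ler_sum => i _; rewrite normrM ger0_norm // ler_wpM2l.
Qed.

Lemma norm_leave_one_out_le (R : realFieldType) (n : nat) (lam : 'I_n -> R) (k : 'I_n) :
  `|2^-1 * ((\sum_(i | i != k) lam i) ^+ 2 - \sum_(i | i != k) lam i ^+ 2)|
    <= (n%:R - 2) / 2 * \sum_(i | i != k) lam i ^+ 2.
Proof.
case: n lam k => [|m] lam k; first by case: k.
have := norm_sqr_sum_sub_sum_sqr_le (predC1 k) lam.
rewrite cardC1 card_ord /= normrM ger0_norm ?invr_ge0 ?ler0n // => bound.
have -> : (m.+1%:R - 2) / 2 = 2^-1 * (m%:R - 1) :> R by rewrite -natr1; field.
by rewrite -mulrA; apply: ler_wpM2l; rewrite ?invr_ge0 ?ler0n.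
Qed.

Theorem lemma2p2 (R : realType) (n : nat) (lam a : 'I_n -> R)
  (ha : \sum_(i < n) a i ^+ 2 = 1) :
  `| \sum_(i < n) lam i ^+ 2 * a i ^+ 2
     - (\sum_(i < n) lam i) * (\sum_(j < n) lam j * a j ^+ 2)
     - 2^-1 * (\sum_(i < n) lam i ^+ 2 - (\sum_(i < n) lam i) ^+ 2) |
  <= (n%:R - 2) / 2 * (\sum_(i < n) lam i ^+ 2 - \sum_(i < n) lam i ^+ 2 * a i ^+ 2).
Proof.
rewrite (quadratic_as_leave_one_out_avg lam ha).
rewrite (sum_sqr_sub_as_leave_one_out_avg lam ha) mulr_sumr.
under [X in _ <= X]eq_bigr => k _ do rewrite mulrCA.
by apply: ler_norm_sum_wM => k; [exact: sqr_ge0 | exact: norm_leave_one_out_le].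
Qed.
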